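(* Let $\mathcal{L}$ be a set of lines of $\mathsf{PG}(7,q^3)$ satisfying (Pt): every point of $\mathsf{PG}(7,q^3)$ is incident with $0$ or $q+1$ elements of $\mathcal{L}$; (Pl): every plane contains $0$, $1$ or $q+1$ elements of $\mathcal{L}$; and (Sd): every solid contains $0,1,q+1$ or $2q+1$ elements of $\mathcal{L}$. Then no three lines of $\mathcal{L}$ form a triangle and no four lines of $\mathcal{L}$ form a quadrangle.
   Context: A triangle (resp. quadrangle) is a set of $3$ (resp. $4$) lines $L_1,\dots,L_k$ such that $L_i$ meets $L_{i+1}$ (indices mod $k$) and the $k$ intersection points are pairwise distinct. *)

From HB Require Import structures.
From mathcomp Require Import all_boot all_order all_algebra all_field.
Set Implicit Arguments. Unset Strict Implicit. Unset Printing Implicit Defensive.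
Import GRing.Theory.
Local Open Scope ring_scope.

(* Projective space PG(n-1, F): subspaces of the vector space 'rV[F]_n.
   Points / lines / planes / solids are the subspaces of (vector) dimension
   1 / 2 / 3 / 4. *)
Section PG.
Variables (F : fieldType) (n : nat).
Notation sub := {vspace 'rV[F]_n}.

Definition is_point (P : sub) : bool := \dim P == 1%N.
Definition is_line (l : sub) : bool := \dim l == 2%N.
Definition is_plane (p : sub) : bool := \dim p == 3%N.
Definition is_solid (s : sub) : bool := \dim s == 4%N.

Definition meets (l m : sub) : bool := \dim (l :&: m) == 1%N.

(* number of elements of the set of lines L (given duplicate-free)
   incident with / contained in a subspace *)
Definition nb_through (L : seq sub) (P : sub) : nat := count (fun l => (P <= l)%VS) L.
Definition nb_in (L : seq sub) (S : sub) : nat := count (fun l => (l <= S)%VS) L.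

Definition triangle (l1 l2 l3 : sub) : Prop :=
  [/\ meets l1 l2, meets l2 l3, meets l3 l1 &
    [/\ (l1 :&: l2)%VS != (l2 :&: l3)%VS,
        (l1 :&: l2)%VS != (l3 :&: l1)%VS &
        (l2 :&: l3)%VS != (l3 :&: l1)%VS]].

Definition quadrangle (l1 l2 l3 l4 : sub) : Prop :=
  [/\ meets l1 l2, meets l2 l3, meets l3 l4, meets l4 l1 &
    uniq [:: (l1 :&: l2)%VS; (l2 :&: l3)%VS; (l3 :&: l4)%VS; (l4 :&: l1)%VS]].
End PG.

From HB Require Import structures.
From mathcomp Require Import all_boot all_order all_algebra all_field.
From mathcomp Require Import zify.
Set Implicit Arguments. Unset Strict Implicit.

(* Let l1, l2 in L meet in R and let pi = l1 + l2. If some line m of L through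
   R left pi, the solid pi + m would contain the three planes pi, l1 + m and
   l2 + m, each holding q + 1 lines of L; the first two already give 2q + 1
   lines, so by (Sd) they cover the solid, and then l2 + m holds only l2 and m.
   Hence the q + 1 lines of L through R all lie in pi, and as pi holds q + 1
   lines they are exactly the lines of L in pi. So a line of L in the plane of
   two meeting lines of L passes through their common point; a triangle or a
   quadrangle produces such a line through two distinct vertices. *)

Lemma count_sub_in_eq (T : eqType) (P Q : pred T) (s : seq T) :
  {in s, forall x, P x -> Q x} -> count Q s <= count P s ->
  {in s, forall x, Q x -> P x}.
Proof.
move=> PQ; rewrite -!size_filter => le_QP x xs Qx.
have ePQ : filter P s = filter P (filter Q s).
  rewrite -filter_predI; apply: eq_in_filter => y ys /=.
  by case Py: (P y); rewrite ?(PQ y ys Py).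
have sub_PQ : subseq (filter P s) (filter Q s) by rewrite ePQ filter_subseq.
have /eqP eq_filter : filter P s == filter Q s.
  by rewrite -(geq_leqif (size_subseq_leqif sub_PQ)).
by have := mem_filter Q x s; rewrite Qx xs -eq_filter mem_filter => /andP[].
Qed.

Lemma count_le1 (T : eqType) (P : pred T) (s : seq T) :
  uniq s -> {in s &, forall x y, P x -> P y -> x = y} -> count P s <= 1.
Proof.
move=> us Puniq; rewrite -size_filter.
case ef: (filter P s) => [|x [|y t]] //.
have : uniq (filter P s) by exact: filter_uniq.
have /andP[] : (x \in filter P s) && (y \in filter P s) by rewrite ef !inE !eqxx ?orbT.
rewrite !mem_filter => /andP[Px xs] /andP[Py ys].
by rewrite ef (Puniq x y) //= inE eqxx.
Qed.

Lemma count_ge2 (T : eqType) (P : pred T) (s : seq T) a b :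
  a \in s -> b \in s -> a != b -> P a -> P b -> 1 < count P s.
Proof.
move=> as_ bs ab Pa Pb; rewrite -size_filter.
apply: (@uniq_leq_size _ [:: a; b]); first by rewrite /= inE ab.
by move=> x; rewrite !inE => /orP[] /eqP ->; rewrite mem_filter ?Pa ?Pb.
Qed.

Lemma count_predU_saturated (T : eqType) (A B C : pred T) (s : seq T) q :
  count A s = q.+1 -> count B s = q.+1 -> count (predI A B) s <= 1 ->
  {in s, forall x, A x || B x -> C x} -> count C s <= (2 * q).+1 ->
  {in s, forall x, C x -> A x || B x}.
Proof.
move=> cA cB cAB ABC cC; apply: (count_sub_in_eq (P := predU A B) ABC).
have := count_predUI A B s; rewrite cA cB.
by move: (count (predU A B) s) (count (predI A B) s) cAB cC => u i; lia.
Qed.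

Section VspaceGeometry.
Variables (K : fieldType) (vT : vectType K).
Implicit Types (A B R X Y a b l m : {vspace vT}).

Lemma point_sub_eq A B : \dim A = 1 -> \dim B = 1 -> (A <= B)%VS -> A = B.
Proof. by move=> dA dB AB; apply/eqP; rewrite eqEdim AB dA dB. Qed.

Lemma point_sub_cap_eq A l m :
  \dim A = 1 -> \dim (l :&: m) = 1 -> (A <= l)%VS -> (A <= m)%VS -> A = (l :&: m)%VS.
Proof. by move=> dA dlm Al Am; apply: point_sub_eq; rewrite ?subv_cap ?Al. Qed.

Lemma dimv_add_meet l m :
  \dim l = 2 -> \dim m = 2 -> \dim (l :&: m) = 1 -> \dim (l + m) = 3.
Proof. by move=> dl dm dlm; have := dimv_sum_cap l m; rewrite dl dm dlm addn1 => -[]. Qed.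

Lemma meet_neq l m : \dim m = 2 -> \dim (l :&: m) = 1 -> l != m.
Proof. by move=> dm dlm; apply/eqP => elm; move: dlm; rewrite elm capvv dm. Qed.

Lemma line_sub_cap_plane_eq X Y a b :
  \dim X = 3 -> ~~ (X <= Y)%VS -> \dim a = 2 -> \dim b = 2 ->
  (a <= X :&: Y)%VS -> (b <= X :&: Y)%VS -> a = b.
Proof.
move=> dX XnY da db aXY bXY.
have dXY : \dim (X :&: Y) <= 2.
  rewrite leqNgt; apply: contra XnY => dXY; apply/capv_idPl/eqP.
  by rewrite eqEdim capvSl dX.
have eXY c : \dim c = 2 -> (c <= X :&: Y)%VS -> c = (X :&: Y)%VS.
  by move=> dc cXY; apply/eqP; rewrite eqEdim cXY dc dXY.
by rewrite (eXY a) // (eXY b).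
Qed.

Lemma line_sub_of_points A B l X :
  \dim A = 1 -> \dim B = 1 -> A != B -> \dim l = 2 ->
  (A <= l)%VS -> (B <= l)%VS -> (A <= X)%VS -> (B <= X)%VS -> (l <= X)%VS.
Proof.
move=> dA dB AnB dl Al Bl AX BX.
have dAB : \dim (A :&: B) = 0.
  have := dimvS (capvSl A B); rewrite dA leq_eqVlt ltnS leqn0 => /orP[/eqP dAB|/eqP //].
  move: AnB; rewrite -(point_sub_eq dAB dA (capvSl A B)).
  by rewrite (point_sub_eq dAB dB (capvSr A B)) eqxx.
have eAB : (A + B)%VS = l.
  apply/eqP; rewrite eqEdim subv_add Al Bl dl.
  by have := dimv_sum_cap A B; rewrite dA dB dAB addn0 => ->.
by rewrite -eAB subv_add AX BX.
Qed.

Lemma dimv_add_line R X m :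
  \dim R = 1 -> \dim m = 2 -> (R <= X)%VS -> (R <= m)%VS -> ~~ (m <= X)%VS ->
  \dim (X + m) = (\dim X).+1.
Proof.
move=> dR dm RX Rm mnX.
have dXm : \dim (X :&: m) = 1.
  apply/eqP; rewrite eqn_leq -{2}dR dimvS ?subv_cap ?RX ?Rm // andbT.
  rewrite -ltnS -dm ltn_neqAle dimvS ?capvSr // andbT.
  apply: contra mnX => /eqP dXm; apply/capv_idPr/eqP.
  by rewrite eqEdim capvSr dXm leqnn.
by have := dimv_sum_cap X m; rewrite dXm dm addn1 addn2 => -[].
Qed.

End VspaceGeometry.

Section LinesOfPG.
Variables (F : fieldType) (n q : nat) (L : seq {vspace 'rV[F]_n}).
Hypothesis L_uniq : uniq L.
Hypothesis L_lines : forall l, l \in L -> is_line l.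
Hypothesis Pt : forall P : {vspace 'rV[F]_n}, is_point P ->
  nb_through L P \in [:: 0%N; q.+1].
Hypothesis Pl : forall S : {vspace 'rV[F]_n}, is_plane S ->
  nb_in L S \in [:: 0%N; 1%N; q.+1].
Hypothesis Sd : forall S : {vspace 'rV[F]_n}, is_solid S ->
  nb_in L S \in [:: 0%N; 1%N; q.+1; (2 * q).+1].
Hypothesis q_gt1 : 1 < q.

Lemma dim_lineL l : l \in L -> \dim l = 2.
Proof. by move/L_lines/eqP. Qed.

Lemma nb_in_plane_two_lines S a b :
  \dim S = 3 -> a \in L -> b \in L -> a != b -> (a <= S)%VS -> (b <= S)%VS ->
  nb_in L S = q.+1.
Proof.
move=> dS aL bL ab aS bS.
have ge2 : 1 < nb_in L S by exact: (count_ge2 aL bL ab).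
by have := Pl (introT eqP dS); rewrite !inE => /or3P[] /eqP e; rewrite e in ge2 *.
Qed.

Lemma nb_in_solid_le S : \dim S = 4 -> nb_in L S <= (2 * q).+1.
Proof.
move=> dS; have := Sd (introT eqP dS); rewrite !inE.
by case/or4P => /eqP ->; rewrite ?ltnS ?leq_pmull ?leq_addl.
Qed.

Lemma solid_lines_in_planes S X Y :
  \dim S = 4 -> \dim X = 3 -> ~~ (X <= Y)%VS -> (X <= S)%VS -> (Y <= S)%VS ->
  nb_in L X = q.+1 -> nb_in L Y = q.+1 ->
  {in L, forall l, (l <= S)%VS -> (l <= X)%VS || (l <= Y)%VS}.
Proof.
move=> dS dX XnY XS YS cX cY.
apply: (count_predU_saturated cX cY); last exact: nb_in_solid_le.
  apply: count_le1 => // a b aL bL /andP[aX aY] /andP[bX bY].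
  by apply: (line_sub_cap_plane_eq dX XnY); rewrite ?dim_lineL ?subv_cap ?aX ?bX.
by move=> l _ /orP[] lS; [exact: subv_trans lS XS | exact: subv_trans lS YS].
Qed.

Lemma nb_in_plane_le2 S X Y Z :
  \dim S = 4 -> \dim X = 3 -> \dim Z = 3 ->
  ~~ (X <= Y)%VS -> ~~ (Z <= X)%VS -> ~~ (Z <= Y)%VS ->
  (X <= S)%VS -> (Y <= S)%VS -> (Z <= S)%VS ->
  nb_in L X = q.+1 -> nb_in L Y = q.+1 -> nb_in L Z <= 2.
Proof.
move=> dS dX dZ XnY ZnX ZnY XS YS ZS cX cY.
have cover := solid_lines_in_planes dS dX XnY XS YS cX cY.
pose inZ X' := [pred l | (l <= Z)%VS && (l <= X')%VS].
have -> : nb_in L Z = count (predU (inZ X) (inZ Y)) L.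
  apply: eq_in_count => l lL /=; case lZ: (l <= Z)%VS => //=.
  exact/esym/cover/(subv_trans lZ).
have inZ_le1 X' : ~~ (Z <= X')%VS -> count (inZ X') L <= 1.
  move=> ZnX'; apply: count_le1 => // a b aL bL /andP[aZ aX] /andP[bZ bX].
  by apply: (line_sub_cap_plane_eq dZ ZnX'); rewrite ?dim_lineL ?subv_cap ?aZ ?bZ.
have := count_predUI (inZ X) (inZ Y) L.
have := inZ_le1 X ZnX; have := inZ_le1 Y ZnY.
by move: (count (predU _ _) L) (count (inZ X) L) (count (inZ Y) L) => u x y; lia.
Qed.

Lemma line_through_meet_sub_plane l1 l2 m :
  l1 \in L -> l2 \in L -> meets l1 l2 -> m \in L -> (l1 :&: l2 <= m)%VS ->
  (m <= l1 + l2)%VS.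
Proof.
move=> l1L l2L /eqP dR mL Rm; apply/negPn/negP => mnpi.
have [[d1 d2] dm] := (dim_lineL l1L, dim_lineL l2L, dim_lineL mL).
set R := (l1 :&: l2)%VS in dR Rm; set pi := (l1 + l2)%VS in mnpi.
have [l1pi l2pi] : (l1 <= pi)%VS /\ (l2 <= pi)%VS by split; [exact: addvSl | exact: addvSr].
have mnl1 : ~~ (m <= l1)%VS by apply: contra mnpi => /subv_trans; apply.
have mnl2 : ~~ (m <= l2)%VS by apply: contra mnpi => /subv_trans; apply.
have [R1 R2] : (R <= l1)%VS /\ (R <= l2)%VS by split; [exact: capvSl | exact: capvSr].
have dpi : \dim pi = 3 by exact: dimv_add_meet.
have dsg : \dim (pi + m) = 4 by rewrite (dimv_add_line dR dm (subv_trans R1 l1pi)) ?dpi.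
have dtau : \dim (l1 + m) = 3 by rewrite (dimv_add_line dR dm R1) ?d1.
have drho : \dim (l2 + m) = 3 by rewrite (dimv_add_line dR dm R2) ?d2.
have [pisg msg] : (pi <= pi + m)%VS /\ (m <= pi + m)%VS by split; [exact: addvSl | exact: addvSr].
have [mtau mrho] : (m <= l1 + m)%VS /\ (m <= l2 + m)%VS by split; exact: addvSr.
have cpi : nb_in L pi = q.+1.
  exact: (nb_in_plane_two_lines dpi l1L l2L (meet_neq d2 dR)).
have ctau : nb_in L (l1 + m) = q.+1.
  apply: (nb_in_plane_two_lines dtau l1L mL) => //; last exact: addvSl.
  by apply: contraNneq mnpi => <-.
have crho : nb_in L (l2 + m) = q.+1.
  apply: (nb_in_plane_two_lines drho l2L mL) => //; last exact: addvSl.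
  by apply: contraNneq mnpi => <-.
have taunpi : ~~ (l1 + m <= pi)%VS by apply: contra mnpi; apply: subv_trans.
have rhonpi : ~~ (l2 + m <= pi)%VS by apply: contra mnpi; apply: subv_trans.
have rhontau : ~~ (l2 + m <= l1 + m)%VS.
  apply: contra mnpi => /(subv_trans (addvSl l2 m)) l2tau.
  have /eqP -> : (pi == l1 + m)%VS by rewrite eqEdim subv_add addvSl l2tau dpi dtau.
  exact: mtau.
have tausg : (l1 + m <= pi + m)%VS by rewrite subv_add (subv_trans l1pi pisg) msg.
have rhosg : (l2 + m <= pi + m)%VS by rewrite subv_add (subv_trans l2pi pisg) msg.
have := nb_in_plane_le2 dsg dtau drho taunpi rhontau rhonpi tausg pisg rhosg ctau cpi.
by rewrite crho ltnS leqNgt q_gt1.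
Qed.

Lemma sub_plane_meetE l1 l2 m :
  l1 \in L -> l2 \in L -> meets l1 l2 -> m \in L ->
  (m <= l1 + l2)%VS = (l1 :&: l2 <= m)%VS.
Proof.
move=> l1L l2L m12 mL; apply/idP/idP; last exact: line_through_meet_sub_plane.
have [d1 d2] := (dim_lineL l1L, dim_lineL l2L).
have cpi : nb_in L (l1 + l2) = q.+1.
  apply: (nb_in_plane_two_lines _ l1L l2L (meet_neq d2 (eqP m12))); last 2 first.
  - exact: addvSl.
  - exact: addvSr.
  exact: dimv_add_meet (eqP m12).
have cR : nb_through L (l1 :&: l2) = q.+1.
  have : 0 < nb_through L (l1 :&: l2).
    by rewrite -has_count; apply/hasP; exists l1; rewrite ?capvSl.
  by have := Pt m12; rewrite !inE => /orP[] /eqP ->.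
apply: (count_sub_in_eq (Q := fun l => (l <= l1 + l2)%VS)) mL.
  by move=> x xL; apply: line_through_meet_sub_plane.
by rewrite -/(nb_in L _) -/(nb_through L _) cpi cR.
Qed.

Lemma meet_sub_lineL l1 l2 m :
  l1 \in L -> l2 \in L -> meets l1 l2 -> m \in L -> (m <= l1 + l2)%VS ->
  (l1 :&: l2 <= m)%VS.
Proof. by move=> l1L l2L m12 mL; rewrite -sub_plane_meetE. Qed.

Lemma no_triangle l1 l2 l3 :
  l1 \in L -> l2 \in L -> l3 \in L -> ~ triangle l1 l2 l3.
Proof.
move=> l1L l2L l3L [m12 m23 m31 [n12_23 _ n23_31]].
have l3pi : (l3 <= l1 + l2)%VS.
  apply: (line_sub_of_points (eqP m23) (eqP m31) n23_31 (dim_lineL l3L)).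
  - exact: capvSr.
  - exact: capvSl.
  - exact: subv_trans (capvSl _ _) (addvSr _ _).
  - exact: subv_trans (capvSr _ _) (addvSl _ _).
have R3 := meet_sub_lineL l1L l2L m12 l3L l3pi.
by move/eqP: n12_23; apply; apply: point_sub_cap_eq (eqP m12) (eqP m23) (capvSr _ _) R3.
Qed.

Lemma no_quadrangle l1 l2 l3 l4 :
  l1 \in L -> l2 \in L -> l3 \in L -> l4 \in L -> ~ quadrangle l1 l2 l3 l4.
Proof.
move=> l1L l2L l3L l4L [m12 m23 m34 m41].
rewrite /= !inE !negb_or => /and4P[/and3P[n12_23 _ n12_41] /andP[n23_34 _] n34_41 _].
have [[d2 d3] d4] := (dim_lineL l2L, dim_lineL l3L, dim_lineL l4L).
set pi1 := (l1 + l2)%VS; set pi2 := (l2 + l3)%VS; set sg := (pi1 + l3)%VS.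
have [l1pi1 l2pi1] : (l1 <= pi1)%VS /\ (l2 <= pi1)%VS by split; [exact: addvSl | exact: addvSr].
have [l2pi2 l3pi2] : (l2 <= pi2)%VS /\ (l3 <= pi2)%VS by split; [exact: addvSl | exact: addvSr].
have [pi1sg l3sg] : (pi1 <= sg)%VS /\ (l3 <= sg)%VS by split; [exact: addvSl | exact: addvSr].
have l3npi1 : ~~ (l3 <= pi1)%VS.
  apply/negP => /(meet_sub_lineL l1L l2L m12 l3L) R3; move/eqP: n12_23; apply.
  exact: point_sub_cap_eq (eqP m12) (eqP m23) (capvSr _ _) R3.
have dpi1 : \dim pi1 = 3 by apply: dimv_add_meet (eqP m12); rewrite ?dim_lineL.
have dpi2 : \dim pi2 = 3 by exact: dimv_add_meet (eqP m23).
have dsg : \dim sg = 4.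
  by rewrite (dimv_add_line (eqP m23) d3 (subv_trans (capvSl _ _) l2pi1) (capvSr _ _)) ?dpi1.
have pi2sg : (pi2 <= sg)%VS by rewrite subv_add (subv_trans l2pi1 pi1sg) l3sg.
have pi2npi1 : ~~ (pi2 <= pi1)%VS by apply: contra l3npi1; apply: subv_trans.
have cpi1 : nb_in L pi1 = q.+1.
  exact: (nb_in_plane_two_lines dpi1 l1L l2L (meet_neq d2 (eqP m12))).
have cpi2 : nb_in L pi2 = q.+1.
  exact: (nb_in_plane_two_lines dpi2 l2L l3L (meet_neq d3 (eqP m23))).
have l4sg : (l4 <= sg)%VS.
  apply: (line_sub_of_points (eqP m41) (eqP m34) _ d4 (capvSl _ _) (capvSr _ _)).
  - by rewrite eq_sym.
  - exact: subv_trans (capvSr _ _) (subv_trans l1pi1 pi1sg).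
  - exact: subv_trans (capvSl _ _) l3sg.
case/orP: (solid_lines_in_planes dsg dpi2 pi2npi1 pi2sg pi1sg cpi2 cpi1 l4L l4sg).
  move/(meet_sub_lineL l2L l3L m23 l4L) => R4; move/eqP: n23_34; apply.
  exact: point_sub_cap_eq (eqP m23) (eqP m34) (capvSr _ _) R4.
move/(meet_sub_lineL l1L l2L m12 l4L) => R4; move/eqP: n12_41; apply.
exact: point_sub_cap_eq (eqP m12) (eqP m41) R4 (capvSl _ _).
Qed.

End LinesOfPG.

Theorem mainTheorem17 (p k q : nat) (F : finFieldType)
  (Hp : prime p) (Hk : (0 < k)%N) (Hq : q = (p ^ k)%N)
  (HF : #|F| = (q ^ 3)%N)
  (L : seq {vspace 'rV[F]_8})
  (HLuniq : uniq L)
  (HLlines : forall l, l \in L -> is_line l)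
  (Pt : forall P : {vspace 'rV[F]_8}, is_point P ->
          nb_through L P \in [:: 0%N; q.+1])
  (Pl : forall S : {vspace 'rV[F]_8}, is_plane S ->
          nb_in L S \in [:: 0%N; 1%N; q.+1])
  (Sd : forall S : {vspace 'rV[F]_8}, is_solid S ->
          nb_in L S \in [:: 0%N; 1%N; q.+1; (2 * q).+1]) :
  (~ exists l1 l2 l3, [/\ l1 \in L, l2 \in L, l3 \in L & triangle l1 l2 l3]) /\
  (~ exists l1 l2 l3 l4,
       [/\ l1 \in L, l2 \in L, l3 \in L, l4 \in L & quadrangle l1 l2 l3 l4]).
Proof.
have q_gt1 : 1 < q.
  by rewrite Hq -(expn0 p) ltn_exp2l ?prime_gt1.
split.
  by case=> l1 [l2 [l3 [l1L l2L l3L]]]; apply: (no_triangle HLuniq HLlines Pt Pl Sd).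
by case=> l1 [l2 [l3 [l4 [l1L l2L l3L l4L]]]]; apply: (no_quadrangle HLuniq HLlines Pt Pl Sd).
Qed.
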